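(* Let $a<b$ be real numbers and let $\eta\in\mathcal{C}^{1}[a,b]$ be a real function with $\eta'(a)\neq\eta'(b)$. For parameters $\alpha,\beta,\kappa$ define the modified, dampened function $$\eta^{\alpha}_{\beta,\kappa}(x)=e^{-\alpha x}\bigl(\eta(x)+\beta x+\kappa\bigr),\qquad x\in[a,b].$$ Then for any $\beta\notin\{-\eta'(a),-\eta'(b)\}$, the choices $$\alpha=\frac{1}{b-a}\log\left(\frac{\eta'(b)+\beta}{\eta'(a)+\beta}\right),\qquad \kappa=\frac{e^{-\alpha b}\bigl(\eta(b)+\beta b\bigr)-e^{-\alpha a}\bigl(\eta(a)+\beta a\bigr)}{e^{-\alpha a}-e^{-\alpha b}}$$ solve the system of (nonlinear) equations $$\eta^{\alpha}_{\beta,\kappa}(a)=\eta^{\alpha}_{\beta,\kappa}(b),\qquad \frac{d\eta^{\alpha}_{\beta,\kappa}}{dx}(a)=\frac{d\eta^{\alpha}_{\beta,\kappa}}{dx}(b).$$ In addition, if $\beta>\max\bigl(|\eta'(b)|,|\eta'(a)|\bigr)$, then $\alpha\in\mathbb{R}$ and $\kappa\in\mathbb{R}$.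
   Context: Here $\log$ denotes a (possibly complex) logarithm; when the ratio inside it is not a positive real number, $\alpha$ (and hence $\kappa$) may be complex. *)

From Stdlib Require Import Reals.
From Coquelicot Require Import Coquelicot.
Open Scope R_scope.

Definition cexp (z : C) : C :=
  (exp (Re z) * cos (Im z), exp (Re z) * sin (Im z)).

(* Derivative of f : R -> V at x relative to the set D (e.g. D = [a,b];
   at an endpoint this is the one-sided derivative):
   lim_{y -> x, y in D, y <> x} (f y - f x) / (y - x) = l. *)
Definition is_derive_on {V : NormedModule R_AbsRing}
  (D : R -> Prop) (f : R -> V) (x : R) (l : V) : Prop :=
  filterlim (fun y => scal (/ (y - x)) (minus (f y) (f x)))
    (within (fun y => D y /\ y <> x) (locally x)) (locally l).

Definition C1_on (a b : R) (eta deta : R -> R) : Prop :=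
  (forall x, a <= x <= b -> is_derive_on (fun y => a <= y <= b) eta x (deta x)) /\
  (forall x, a <= x <= b ->
     filterlim deta (within (fun y => a <= y <= b) (locally x)) (locally (deta x))).

Definition damped (eta : R -> R) (alpha : C) (beta : R) (kappa : C) (x : R) : C :=
  Cmult (cexp (Copp (Cmult alpha (RtoC x)))) (Cplus (RtoC (eta x + beta * x)) kappa).

Definition kappa_of (eta : R -> R) (a b beta : R) (alpha : C) : C :=
  Cdiv (Cminus (Cmult (cexp (Copp (Cmult alpha (RtoC b)))) (RtoC (eta b + beta * b)))
               (Cmult (cexp (Copp (Cmult alpha (RtoC a)))) (RtoC (eta a + beta * a))))
       (Cminus (cexp (Copp (Cmult alpha (RtoC a)))) (cexp (Copp (Cmult alpha (RtoC b))))).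

From Stdlib Require Import Reals Lra Lia.
From Coquelicot Require Import Coquelicot.
Open Scope R_scope.

(* With G x = e^{-alpha x}, the derivative of the damped function is
   G (eta' + beta) - alpha * (damped function).  Since e^{alpha (b - a)} is the
   ratio (eta'(b) + beta) / (eta'(a) + beta), we get G(a) (eta'(a) + beta) =
   G(b) (eta'(b) + beta); and kappa is the solution of the linear equation
   G(a) (eta(a) + beta a + kappa) = G(b) (eta(b) + beta b + kappa), solvable
   because G(a) <> G(b) when eta'(a) <> eta'(b).  For beta > max |eta'|, the ratio is positive, so its
   principal logarithm, hence alpha and kappa, are real. *)

Section ComplexLimits.
Context {T : Type} {F : (T -> Prop) -> Prop} {FF : Filter F}.

Lemma filterlim_C_components (u : T -> C) (U : C) :
  filterlim u F (locally U) <->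
  filterlim (fun t => Re (u t)) F (locally (Re U)) /\
  filterlim (fun t => Im (u t)) F (locally (Im U)).
Proof.
  rewrite !filterlim_locally. split.
  - intros H; split; intros eps; generalize (H eps); apply filter_imp; now intros t [].
  - intros [H1 H2] eps. generalize (filter_and _ _ (H1 eps) (H2 eps)).
    apply filter_imp. now intros t [].
Qed.

Lemma filterlim_Rplus (f g : T -> R) (l m : R) :
  filterlim f F (locally l) -> filterlim g F (locally m) ->
  filterlim (fun t => f t + g t) F (locally (l + m)).
Proof. intros Hf Hg. exact (filterlim_comp_2 _ _ _ Hf Hg (filterlim_plus l m)). Qed.

Lemma filterlim_Rminus (f g : T -> R) (l m : R) :
  filterlim f F (locally l) -> filterlim g F (locally m) ->
  filterlim (fun t => f t - g t) F (locally (l - m)).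
Proof.
  intros Hf Hg. apply filterlim_Rplus; [exact Hf|].
  exact (filterlim_comp _ _ _ _ _ _ _ _ Hg (filterlim_opp m)).
Qed.

Lemma filterlim_Rmult (f g : T -> R) (l m : R) :
  filterlim f F (locally l) -> filterlim g F (locally m) ->
  filterlim (fun t => f t * g t) F (locally (l * m)).
Proof. intros Hf Hg. exact (filterlim_comp_2 _ _ _ Hf Hg (filterlim_mult l m)). Qed.

Lemma filterlim_Cplus (u v : T -> C) (U V : C) :
  filterlim u F (locally U) -> filterlim v F (locally V) ->
  filterlim (fun t => (u t + v t)%C) F (locally (U + V)%C).
Proof.
  rewrite !filterlim_C_components. intros [Hu1 Hu2] [Hv1 Hv2].
  split; apply filterlim_Rplus; assumption.
Qed.

Lemma filterlim_Cmult (u v : T -> C) (U V : C) :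
  filterlim u F (locally U) -> filterlim v F (locally V) ->
  filterlim (fun t => (u t * v t)%C) F (locally (U * V)%C).
Proof.
  rewrite !filterlim_C_components. intros [Hu1 Hu2] [Hv1 Hv2]. split.
  - apply filterlim_Rminus; apply filterlim_Rmult; assumption.
  - apply filterlim_Rplus; apply filterlim_Rmult; assumption.
Qed.

End ComplexLimits.

Section DeriveWithin.
Variable D : R -> Prop.

Lemma is_derive_on_ext {V : NormedModule R_AbsRing} (f g : R -> V) (x : R) (l : V) :
  (forall y, f y = g y) -> is_derive_on D f x l -> is_derive_on D g x l.
Proof.
  intros Efg H. apply filterlim_ext with (2 := H). intros y. now rewrite !Efg.
Qed.

Lemma is_derive_on_of_is_derive (f : R -> R) (x l : R) :
  is_derive f x l -> is_derive_on D f x l.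
Proof.
  intros H. apply is_derive_Reals in H.
  apply filterlim_locally. intros eps.
  destruct (H eps (cond_pos eps)) as [d Hd].
  exists d. intros y Hy [_ Hyx].
  specialize (Hd (y - x) ltac:(lra) Hy).
  rewrite Rplus_minus in Hd.
  unfold ball; simpl; unfold AbsRing_ball, abs, minus, plus, opp, scal; simpl.
  unfold mult; simpl.
  replace (/ (y - x) * (f y + - f x) + - l) with ((f y - f x) / (y - x) - l)
    by (unfold Rdiv; ring).
  exact Hd.
Qed.

Lemma is_derive_on_plus (f g : R -> R) (x l m : R) :
  is_derive_on D f x l -> is_derive_on D g x m ->
  is_derive_on D (fun y => f y + g y) x (l + m).
Proof.
  intros Hf Hg. eapply filterlim_ext; [|exact (filterlim_Rplus _ _ _ _ Hf Hg)].
  intros y. unfold scal, minus, plus, opp, mult; simpl. unfold mult, plus, opp; simpl. ring.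
Qed.

Lemma is_derive_on_pair (f g : R -> R) (x l m : R) :
  is_derive_on D f x l -> is_derive_on D g x m ->
  is_derive_on D (fun y => (f y, g y) : C) x ((l, m) : C).
Proof. intros Hf Hg. now apply filterlim_C_components. Qed.

Lemma filterlim_minus_within (x : R) :
  filterlim (fun y => y - x) (within (fun y => D y /\ y <> x) (locally x)) (locally 0).
Proof.
  eapply filterlim_filter_le_1; [apply filter_le_within|].
  rewrite <- (Rminus_diag x).
  apply filterlim_Rminus; [apply filterlim_id | apply filterlim_const].
Qed.

Lemma is_derive_on_continuous {V : NormedModule R_AbsRing} (f : R -> V) (x : R) (l : V) :
  is_derive_on D f x l ->
  filterlim f (within (fun y => D y /\ y <> x) (locally x)) (locally (f x)).
Proof.
  intros H.
  assert (Ex : plus (f x) (scal zero l) = f x) by now rewrite scal_zero_l, plus_zero_r.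
  rewrite <- Ex.
  apply filterlim_within_ext with
    (f := fun y => plus (f x) (scal (y - x) (scal (/ (y - x)) (minus (f y) (f x))))).
  { intros y [_ Hyx].
    rewrite scal_assoc.
    replace (mult (y - x) (/ (y - x))) with (@one R_Ring) by (symmetry; apply Rinv_r; lra).
    rewrite scal_one. unfold minus.
    now rewrite plus_comm, <- plus_assoc, (@plus_opp_l V), plus_zero_r. }
  eapply (filterlim_comp_2 (fun _ => f x) _ plus); [apply filterlim_const| |apply filterlim_plus].
  exact (filterlim_comp_2 _ _ scal (filterlim_minus_within x) H (filterlim_scal 0 l)).
Qed.

Lemma is_derive_on_Cmult (f g : R -> C) (x : R) (l m : C) :
  is_derive_on D f x l -> is_derive_on D g x m ->
  is_derive_on D (fun y => (f y * g y)%C) x (l * g x + f x * m)%C.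
Proof.
  intros Hf Hg. pose proof (is_derive_on_continuous _ _ _ Hf) as Cf.
  unfold is_derive_on in *.
  apply filterlim_ext with
   (f := fun y => (g x * scal (/ (y - x))%R (minus (f y) (f x)) +
                   f y * scal (/ (y - x))%R (minus (g y) (g x)))%C).
  { intros y. rewrite !scal_R_Cmult. change minus with Cminus. ring. }
  replace (l * g x + f x * m)%C with (g x * l + f x * m)%C by ring.
  apply filterlim_Cplus; apply filterlim_Cmult; try assumption; apply filterlim_const.
Qed.

End DeriveWithin.

Lemma cexp_plus (z w : C) : cexp (z + w)%C = (cexp z * cexp w)%C.
Proof.
  destruct z as [x y], w as [u v]. unfold cexp; simpl.
  rewrite exp_plus, cos_plus, sin_plus. apply injective_projections; simpl; ring.
Qed.

Lemma cexp_RtoC (r : R) : cexp (RtoC r) = RtoC (exp r).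
Proof.
  unfold cexp; simpl. rewrite cos_0, sin_0, Rmult_1_r, Rmult_0_r. reflexivity.
Qed.

Lemma cexp_neq_0 (z : C) : cexp z <> 0%C.
Proof.
  intros E. apply C1_nz.
  rewrite <- exp_0, <- cexp_RtoC, <- (Cplus_opp_r z), cexp_plus, E. ring.
Qed.

Lemma cexp_opp_mul_sub (alpha : C) (a b : R) :
  cexp (- (alpha * a))%C = (cexp (- (alpha * b)) * cexp (alpha * (b - a)%R))%C.
Proof. rewrite <- cexp_plus, RtoC_minus. f_equal. ring. Qed.

Lemma is_derive_on_cexp_linear (D : R -> Prop) (alpha : C) (x : R) :
  is_derive_on D (fun y => cexp (- (alpha * y))%C) x (- alpha * cexp (- (alpha * x)))%C.
Proof.
  destruct alpha as [p q].
  apply is_derive_on_ext with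
    (f := fun y => ((exp (- (p * y)) * cos (- (q * y)), exp (- (p * y)) * sin (- (q * y))) : C)).
  { intros y. unfold cexp; simpl. do 3 f_equal; ring. }
  unfold cexp; simpl.
  replace (- (p * x - q * 0)) with (- (p * x)) by ring.
  replace (- (p * 0 + q * x)) with (- (q * x)) by ring.
  apply is_derive_on_pair; apply is_derive_on_of_is_derive; auto_derive; auto; simpl; ring.
Qed.

Lemma is_derive_on_damped (D : R -> Prop) (eta : R -> R) (alpha : C) (beta : R) (kappa : C)
    (x d : R) :
  is_derive_on D eta x d ->
  is_derive_on D (damped eta alpha beta kappa) x
    (cexp (- (alpha * x)) * RtoC (d + beta) - alpha * damped eta alpha beta kappa x)%C.
Proof.
  intros Heta.
  assert (Hshift : is_derive_on D (fun y => (RtoC (eta y + beta * y) + kappa)%C) x (RtoC (d + beta))).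
  { destruct kappa as [k1 k2].
    apply is_derive_on_ext with (f := fun y => ((eta y + (beta * y + k1), 0 + k2) : C)).
    { intros y. apply injective_projections; simpl; ring. }
    apply is_derive_on_pair.
    - apply is_derive_on_plus; [exact Heta|].
      apply is_derive_on_of_is_derive. auto_derive; auto; ring.
    - apply is_derive_on_of_is_derive. auto_derive; auto; ring. }
  replace (cexp _ * _ - _)%C with
    (- alpha * cexp (- (alpha * x)) * (RtoC (eta x + beta * x) + kappa) +
     cexp (- (alpha * x)) * RtoC (d + beta))%C by (unfold damped; ring).
  exact (is_derive_on_Cmult _ _ _ _ _ _ (is_derive_on_cexp_linear D alpha x) Hshift).
Qed.

Lemma damped_kappa_of_endpoints (eta : R -> R) (a b beta : R) (alpha : C) :
  cexp (- (alpha * a))%C <> cexp (- (alpha * b))%C ->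
  let kappa := kappa_of eta a b beta alpha in
  damped eta alpha beta kappa a = damped eta alpha beta kappa b.
Proof. intros Hne kappa. unfold kappa, damped, kappa_of. field. now apply Cminus_eq_contra. Qed.

Lemma Im_Cdiv_real (z w : C) : Im z = 0 -> Im w = 0 -> Im (z / w)%C = 0.
Proof. destruct z as [x y], w as [u v]. simpl. intros -> ->. unfold Rdiv. ring. Qed.

Lemma Im_kappa_of_real (eta : R -> R) (a b beta : R) (alpha : C) :
  Im alpha = 0 -> Im (kappa_of eta a b beta alpha) = 0.
Proof.
  destruct alpha as [p q]. intros Hq; simpl in Hq; subst q.
  unfold kappa_of. change (p, 0) with (RtoC p). rewrite <- !RtoC_mult, <- !RtoC_opp, !cexp_RtoC, <- !RtoC_mult, <- !RtoC_minus.
  apply Im_Cdiv_real; apply im_RtoC.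
Qed.

Lemma Im_eq_0_of_cexp_pos (L : C) (r : R) :
  0 < r -> cexp L = RtoC r -> - PI < Im L <= PI -> Im L = 0.
Proof.
  destruct L as [u v]. unfold cexp; simpl. intros Hr HL Hv.
  pose proof (f_equal fst HL) as Hre. pose proof (f_equal snd HL) as Him. simpl in Hre, Him.
  pose proof (exp_pos u) as Hu.
  assert (Hsin : sin v = 0) by nra.
  destruct (sin_eq_0_0 _ Hsin) as [k ->].
  assert (Hk : (-1 < k <= 1)%Z).
  { pose proof PI_RGT_0. split; [apply lt_IZR | apply le_IZR]; nra. }
  assert (k = 0%Z \/ k = 1%Z) as [-> | ->] by lia.
  - ring.
  - rewrite Rmult_1_l, cos_PI in Hre. nra.
Qed.

Theorem lemma1 (a b : R) (eta deta : R -> R) (beta : R) (L : C) :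
  a < b ->
  C1_on a b eta deta ->
  deta a <> deta b ->
  beta <> - deta a -> beta <> - deta b ->
  cexp L = RtoC ((deta b + beta) / (deta a + beta)) ->
  let alpha := Cdiv L (RtoC (b - a)) in
  let kappa := kappa_of eta a b beta alpha in
  (damped eta alpha beta kappa a = damped eta alpha beta kappa b /\
   exists da db : C,
     is_derive_on (fun y => a <= y <= b) (damped eta alpha beta kappa) a da /\
     is_derive_on (fun y => a <= y <= b) (damped eta alpha beta kappa) b db /\
     da = db) /\
  (beta > Rmax (Rabs (deta b)) (Rabs (deta a)) ->
   - PI < Im L <= PI ->
   Im alpha = 0 /\ Im kappa = 0).
Proof.
  intros Hab [Hderiv _] Hne Hba Hbb HL alpha kappa.
  set (G := fun x : R => cexp (- (alpha * x))%C).
  assert (HalphaL : Cmult alpha (RtoC (b - a)) = L).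
  { unfold alpha. field. intros E. apply (f_equal Re) in E. simpl in E. lra. }
  assert (HGd : Cmult (G a) (RtoC (deta a + beta)) = Cmult (G b) (RtoC (deta b + beta))).
  { unfold G. rewrite (cexp_opp_mul_sub alpha a b), HalphaL, HL, RtoC_div by lra.
    field. intros E. apply (f_equal Re) in E. simpl in E. lra. }
  assert (HGab : G a <> G b).
  { intros E. apply Hne.
    assert (Hc : RtoC (deta a + beta) = RtoC (deta b + beta)).
    { transitivity (Cmult (G a) (RtoC (deta a + beta)) / G b)%C.
      - rewrite E. field. apply cexp_neq_0.
      - rewrite HGd. field. apply cexp_neq_0. }
    apply RtoC_inj in Hc. lra. }
  assert (Hends : damped eta alpha beta kappa a = damped eta alpha beta kappa b)
    by exact (damped_kappa_of_endpoints eta a b beta alpha HGab).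
  split; [split|].
  - exact Hends.
  - do 2 eexists. split; [|split].
    + apply is_derive_on_damped, Hderiv. lra.
    + apply is_derive_on_damped, Hderiv. lra.
    + fold (G a) (G b). now rewrite HGd, Hends.
  - intros Hbeta HImL.
    pose proof (Rmax_l (Rabs (deta b)) (Rabs (deta a))).
    pose proof (Rmax_r (Rabs (deta b)) (Rabs (deta a))).
    pose proof (Rle_abs (- deta a)). pose proof (Rle_abs (- deta b)).
    rewrite Rabs_Ropp in *.
    assert (Hratio : 0 < (deta b + beta) / (deta a + beta)) by (apply Rdiv_lt_0_compat; lra).
    assert (HalphaR : Im alpha = 0).
    { apply Im_Cdiv_real; [exact (Im_eq_0_of_cexp_pos L _ Hratio HL HImL) | apply im_RtoC]. }
    split; [exact HalphaR | exact (Im_kappa_of_real eta a b beta alpha HalphaR)].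
Qed.
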